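(* The class of data languages accepted by SAFA is not closed under inverse homomorphism: there exist a data language $L\subseteq(\Sigma\times D)^*$ accepted by some SAFA and a homomorphism $h:(\Sigma\times D)^*\to(\Sigma\times D)^*$ such that no SAFA accepts $h^{-1}(L)=\{w: h(w)\in L\}$.
   Context: $D$ is a fixed countably infinite set of data values; for a finite alphabet $\Sigma$, data words are elements of $(\Sigma\times D)^*$. A homomorphism of data words is a monoid homomorphism $h:(\Sigma\times D)^*\to(\Sigma\times D)^*$ ($h(\varepsilon)=\varepsilon$, $h(uv)=h(u)h(v)$), determined by the images of single letters (which may be the empty word). A set augmented finite automaton (SAFA) is a tuple $M=(Q,\Sigma\times D,q_0,F,H,\delta)$: $Q$ finite set of states, $q_0\in Q$ initial, $F\subseteq Q$ final, $H=\{h_1,\dots,h_m\}$ a finite collection of (names of) sets of data values, $\delta\subseteq Q\times\Sigma\times C\times OP\times Q$ with $C=\{p(h_i),\,!p(h_i)\}$, $OP=\{-\}\cup\{\mathsf{ins}(h_i)\}$. Configurations are $(q,\langle S_1,\dots,S_m\rangle)$ with $S_i\subseteq D$ finite; initially state $q_0$ and all sets are empty. On reading $(a,d)$, a transition $(q,a,\alpha,op,q')$ from the current state may be taken if $\alpha=p(h_i)$ and $d\in S_i$, or $\alpha=\,!p(h_i)$ and $d\notin S_i$; then the state becomes $q'$ and if $op=\mathsf{ins}(h_j)$ the value $d$ is added to $S_j$ ($op=-$ changes nothing). A word is accepted if some run reads it entirely and ends in $F$. *)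

From mathcomp Require Import all_boot.
From Stdlib Require List.
Set Implicit Arguments. Unset Strict Implicit. Unset Printing Implicit Defensive.

Definition D := nat.

Definition dword (Sigma : finType) := seq (Sigma * D).

Definition is_dword_hom (Sigma : finType) (h : dword Sigma -> dword Sigma) : Prop :=
  h [::] = [::] /\ forall u v, h (u ++ v) = h u ++ h v.

(* Conditions p(h_i) / !p(h_i) and operations - / ins(h_j), for m sets. *)
Inductive cond (m : nat) := CIn of 'I_m | CNotIn of 'I_m.
Inductive op (m : nat) := ONop | OIns of 'I_m.

Record SAFA (Sigma : finType) := {
  safa_Q : finType;
  safa_m : nat;
  safa_q0 : safa_Q;
  safa_F : pred safa_Q;
  safa_delta : seq (safa_Q * Sigma * cond safa_m * op safa_m * safa_Q)
}.

(* Contents of the m sets (always finite, since they start empty and grow by insertions). *)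
Definition sets (m : nat) := 'I_m -> D -> bool.

Definition sets0 (m : nat) : sets m := fun _ _ => false.

Definition cond_holds (m : nat) (c : cond m) (S : sets m) (d : D) : bool :=
  match c with
  | CIn i => S i d
  | CNotIn i => ~~ S i d
  end.

Definition apply_op (m : nat) (o : op m) (d : D) (S : sets m) : sets m :=
  match o with
  | ONop => S
  | OIns j => fun i x => ((i == j) && (x == d)) || S i x
  end.

Fixpoint accepts_from (Sigma : finType) (M : SAFA Sigma)
    (q : safa_Q M) (S : sets (safa_m M)) (w : dword Sigma) : Prop :=
  match w with
  | [::] => @safa_F Sigma M q
  | (a, d) :: w' =>
      exists (c : cond (safa_m M)) (o : op (safa_m M)) (q' : safa_Q M),
        Stdlib.Lists.List.In (q, a, c, o, q') (safa_delta M) /\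
        cond_holds c S d /\
        @accepts_from Sigma M q' (apply_op o d S) w'
  end.

Definition safa_accepts (Sigma : finType) (M : SAFA Sigma) (w : dword Sigma) : Prop :=
  @accepts_from Sigma M (safa_q0 M) (@sets0 (safa_m M)) w.

From mathcomp Require Import all_boot.

(* A SAFA starts with empty sets and only ever compares data values for
   membership, so its language is invariant under every injective renaming of
   data values.  The language of two-letter words carrying the same value twice
   is accepted by a SAFA; its inverse image under the homomorphism halving every
   value contains (0)(1) but not its injective renaming (1)(2), so no SAFA
   accepts it. *)

Set Implicit Arguments.
Unset Strict Implicit.
Unset Printing Implicit Defensive.

Definition rename_dword (Sigma : finType) (f : D -> D) (w : dword Sigma) :
    dword Sigma :=
  map (fun p => (p.1, f p.2)) w.

Lemma rename_dword_hom (Sigma : finType) (f : D -> D) :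
  is_dword_hom (@rename_dword Sigma f).
Proof. by split=> // u v; rewrite /rename_dword map_cat. Qed.

Section InjectiveRenaming.

Variables (Sigma : finType) (M : SAFA Sigma) (f : D -> D).
Hypothesis f_inj : injective f.

Definition renamed_sets (S S' : sets (safa_m M)) : Prop :=
  forall i d, S' i (f d) = S i d.

Lemma renamed_sets_op (o : op (safa_m M)) d S S' :
  renamed_sets S S' -> renamed_sets (apply_op o d S) (apply_op o (f d) S').
Proof. by case: o => [|j] RS i x /=; rewrite RS ?(inj_eq f_inj). Qed.

Lemma accepts_from_rename w q S S' :
  renamed_sets S S' -> accepts_from q S w ->
  accepts_from q S' (rename_dword f w).
Proof.
elim: w q S S' => [|[a d] w IHw] q S S' RS //= [c [o [q' [tr [cS acc]]]]].
exists c, o, q'; split=> //; split; last exact: IHw (renamed_sets_op o d RS) acc.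
by case: c cS {tr} => i /=; rewrite RS.
Qed.

Lemma safa_accepts_rename w :
  safa_accepts M w -> safa_accepts M (rename_dword f w).
Proof. exact: accepts_from_rename. Qed.

End InjectiveRenaming.

Definition twin_dword (w : dword unit) : Prop := exists x, w = [:: (tt, x); (tt, x)].

Definition twin_q0 : 'I_3 := ord0.
Definition twin_q1 : 'I_3 := Ordinal (isT : 1 < 3).
Definition twin_q2 : 'I_3 := Ordinal (isT : 2 < 3).

Definition twin_safa : SAFA unit := {|
  safa_Q := 'I_3;
  safa_m := 1;
  safa_q0 := twin_q0;
  safa_F := pred1 twin_q2;
  safa_delta := [:: (twin_q0, tt, CNotIn ord0, OIns ord0, twin_q1);
                    (twin_q1, tt, CIn ord0, ONop 1, twin_q2)]
|}.

Lemma twin_safa_delta q a c o q' :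
  List.In (q, a, c, o, q') (safa_delta twin_safa) ->
  [/\ q = twin_q0, c = CNotIn ord0, o = OIns ord0 & q' = twin_q1] \/
  [/\ q = twin_q1, c = CIn ord0, o = ONop 1 & q' = twin_q2].
Proof. by case=> [[-> _ -> -> ->]|[[-> _ -> -> ->]|[]]]; [left | right]. Qed.

Lemma twin_safa_sound w : safa_accepts twin_safa w -> twin_dword w.
Proof.
case: w => [|[[] d] w] //= [c [o [q1 [/twin_safa_delta tr1 [_]]]]].
case: tr1 => [[_ _ -> ->]|[/eqP //]].
case: w => [|[[] d'] w] //= [c' [o' [q2 [/twin_safa_delta tr2 [cS]]]]].
case: tr2 cS => [[/eqP //]|[_ -> -> ->]].
rewrite /= /sets0 orbF => /eqP ->.
case: w => [|[[] d''] w] /=; first by exists d.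
by case=> [c'' [o'' [q3 [/twin_safa_delta [[/eqP]|[/eqP]] //]]]].
Qed.

Lemma twin_safa_complete w : twin_dword w -> safa_accepts twin_safa w.
Proof.
move=> [x ->] /=.
exists (CNotIn ord0), (OIns ord0), twin_q1; split; first by left.
split=> //; exists (CIn ord0), (ONop 1), twin_q2; split; first by right; left.
by rewrite /= !eqxx.
Qed.

Theorem theorem10 :
  exists (Sigma : finType) (L : dword Sigma -> Prop) (h : dword Sigma -> dword Sigma),
    (exists M : SAFA Sigma, forall w, safa_accepts M w <-> L w) /\
    is_dword_hom h /\
    ~ (exists M' : SAFA Sigma, forall w, safa_accepts M' w <-> L (h w)).
Proof.
exists unit, twin_dword, (@rename_dword unit half); split.
  by exists twin_safa => w; split; [exact: twin_safa_sound | exact: twin_safa_complete].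
split; first exact: rename_dword_hom.
move=> [M' accM'].
have acc01 : safa_accepts M' [:: (tt, 0); (tt, 1)] by apply/accM'; exists 0.
have /accM' [x [/= x0 x1]] := safa_accepts_rename succn_inj acc01.
by rewrite -x0 in x1.
Qed.
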